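(* Every rooted duplication tree $T$ with $n$ leaves admits a unique finite sequence of duplication events $(B_1,B_2,\dots,B_k)$ with $B_1\preceq B_2\preceq\cdots\preceq B_k$ such that applying $B_1,\dots,B_k$ in this order to the single root gene produces $T$ (with its leaf order).
   Context: A duplication event on a current ordered array of genes $(g_1,\dots,g_m)$ is specified by a contiguous set of indices $B=\{i,i+1,\dots,i+\ell-1\}$ with $1\le i\le i+\ell-1\le m$; applying it gives each $g_j$, $j\in B$, two new children $\mathrm{lc}(g_j),\mathrm{rc}(g_j)$ and replaces $g_i,\dots,g_{i+\ell-1}$ by $\mathrm{lc}(g_i),\dots,\mathrm{lc}(g_{i+\ell-1}),\mathrm{rc}(g_i),\dots,\mathrm{rc}(g_{i+\ell-1})$. A rooted duplication tree is a rooted binary tree with ordered leaves arising from a single root gene by a finite sequence of such events (internal nodes = duplicated genes, leaves = final genes in order). For index sets $B_1,B_2$ write $B_1\prec B_2$ iff $\max B_1<\min B_2$, and $B_1\preceq B_2$ iff not $B_2\prec B_1$ (i.e. $\min B_1\le \max B_2$). *)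

From mathcomp Require Import all_boot.
Set Implicit Arguments.
Unset Strict Implicit.
Unset Printing Implicit Defensive.

(* A gene is identified by its address in the duplication tree: the path
   from the root gene, [false] meaning "left child lc" and [true] meaning
   "right child rc".  The root gene is [::]. *)
Definition gene := seq bool.
Definition lc (g : gene) : gene := rcons g false.
Definition rc (g : gene) : gene := rcons g true.

Definition root_array : seq gene := [:: [::]].

(* A duplication event B = {i, ..., j} (contiguous, 1-based indices) is
   represented by the pair (min B, max B) = (i, j). *)
Definition event := (nat * nat)%type.
Definition ev_min (B : event) : nat := B.1.
Definition ev_max (B : event) : nat := B.2.

Definition valid_event (m : nat) (B : event) : bool :=
  [&& 1 <= ev_min B, ev_min B <= ev_max B & ev_max B <= m].

(* Apply B = {i..j}: replace g_i..g_j by lc g_i .. lc g_j, rc g_i .. rc g_j. *)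
Definition apply_event (s : seq gene) (B : event) : seq gene :=
  let pre := take (ev_min B).-1 s in
  let blk := take (ev_max B - (ev_min B).-1) (drop (ev_min B).-1 s) in
  let suf := drop (ev_max B) s in
  pre ++ map lc blk ++ map rc blk ++ suf.

Fixpoint valid_events (s : seq gene) (Bs : seq event) : bool :=
  match Bs with
  | [::] => true
  | B :: Bs' => valid_event (size s) B && valid_events (apply_event s B) Bs'
  end.

Fixpoint apply_events (s : seq gene) (Bs : seq event) : seq gene :=
  match Bs with
  | [::] => s
  | B :: Bs' => apply_events (apply_event s B) Bs'
  end.

(* Bs, applied in order to the single root gene, produces the tree T
   (given by its ordered leaf array; internal nodes = proper prefixes). *)
Definition produces (Bs : seq event) (T : seq gene) : Prop :=
  valid_events root_array Bs /\ apply_events root_array Bs = T.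

Definition dup_tree (T : seq gene) : Prop := exists Bs, produces Bs T.

Definition ev_prec (B1 B2 : event) : bool := ev_max B1 < ev_min B2.
Definition ev_preceq (B1 B2 : event) : bool := ~~ ev_prec B2 B1.

From mathcomp Require Import all_boot zify.
Set Implicit Arguments.
Unset Strict Implicit.
Unset Printing Implicit Defensive.

(* Existence: sort the events one at a time.  If the next event B satisfies
   B ≺ C for the last event C of the already sorted prefix, the two blocks
   are disjoint, so B can be inserted earlier (recursively) and C, shifted
   right by the length of B, re-applied after it.
   Uniqueness: the genes of a duplication tree are pairwise incomparable for
   the prefix order, hence distinct, and in the result of a sorted sequence
   no tandem duplicate [lc X ++ rc X] starts right of the block of the last
   event.  The last event is therefore read off the final array as its
   rightmost tandem duplicate, and induction concludes. *)

Definition block_event (P X : seq gene) : event := (size P + 1, size P + size X).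

Lemma apply_block_event (P X S : seq gene) :
  apply_event (P ++ X ++ S) (block_event P X) = P ++ map lc X ++ map rc X ++ S.
Proof.
rewrite /apply_event /block_event /ev_min /ev_max /= addn1 /=.
rewrite take_size_cat // drop_size_cat // addKn take_size_cat //.
by rewrite [P ++ X ++ S]catA drop_size_cat ?size_cat.
Qed.

Lemma valid_block_event (P X S : seq gene) :
  0 < size X -> valid_event (size (P ++ X ++ S)) (block_event P X).
Proof. by rewrite /valid_event /ev_min /ev_max /= !size_cat; lia. Qed.

Lemma valid_event_block (s : seq gene) (B : event) : valid_event (size s) B ->
  exists P X S : seq gene, [/\ s = P ++ X ++ S, 0 < size X & B = block_event P X].
Proof.
case: B => i j; rewrite /valid_event /ev_min /ev_max /= => /and3P [i_gt0 le_ij le_js].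
exists (take i.-1 s), (take (j - i.-1) (drop i.-1 s)), (drop j s).
rewrite /block_event size_takel ?size_takel ?size_drop; try lia.
split; [|lia|congr pair; lia].
have -> : drop j s = drop (j - i.-1) (drop i.-1 s) by rewrite drop_drop subnK //; lia.
by rewrite !cat_take_drop.
Qed.

Lemma apply_events_rcons s Bs B :
  apply_events s (rcons Bs B) = apply_event (apply_events s Bs) B.
Proof. by elim: Bs s => //= C Bs IH s; exact: IH. Qed.

Lemma valid_events_rcons s Bs B : valid_events s (rcons Bs B) =
  valid_events s Bs && valid_event (size (apply_events s Bs)) B.
Proof. by elim: Bs s => [|C Bs IH] s /=; rewrite ?andbT // IH andbA. Qed.

Definition event_len (B : event) : nat := ev_max B - (ev_min B).-1.

Lemma event_len_block (P X : seq gene) : event_len (block_event P X) = size X.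
Proof. by rewrite /event_len /block_event /ev_min /ev_max /= addn1 /= addKn. Qed.

Definition last_min (Bs : seq event) : nat := ev_min (last (0, 0) Bs).

Lemma last_min_rcons (Bs : seq event) (B : event) : last_min (rcons Bs B) = ev_min B.
Proof. by rewrite /last_min last_rcons. Qed.

Lemma ev_preceqE (B1 B2 : event) : ev_preceq B1 B2 = (ev_min B1 <= ev_max B2).
Proof. by rewrite /ev_preceq /ev_prec -leqNgt. Qed.

Lemma sorted_preceq_rcons (Bs : seq event) (B : event) :
  sorted ev_preceq (rcons Bs B) = sorted ev_preceq Bs && (last_min Bs <= ev_max B).
Proof. by case: Bs => [|C Bs] //=; rewrite rcons_path ev_preceqE. Qed.

Lemma sorted_insert_event (s : seq gene) (Cs : seq event) (B : event) :
  valid_events s Cs -> sorted ev_preceq Cs ->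
  valid_event (size (apply_events s Cs)) B ->
  exists Ds, [/\ valid_events s Ds, apply_events s Ds = apply_event (apply_events s Cs) B,
    sorted ev_preceq Ds & last_min Ds <= maxn (last_min Cs + event_len B) (ev_min B)].
Proof.
elim/last_ind: Cs B => [|Cs C IH] B.
  by move=> _ _ vB; exists [:: B]; rewrite /= vB /last_min /= leq_maxr.
rewrite valid_events_rcons sorted_preceq_rcons apply_events_rcons.
move=> /andP [vCs vC] /andP [sCs sC].
have [P [X [S [eCs X_gt0 eC]]]] := valid_event_block vC; subst C.
rewrite last_min_rcons eCs apply_block_event => vB.
have [C_le_B | B_lt_C] := leqP (size P + 1) (ev_max B).
  exists (rcons (rcons Cs (block_event P X)) B).
  rewrite !valid_events_rcons !apply_events_rcons vCs vC eCs apply_block_event vB.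
  rewrite !sorted_preceq_rcons sCs sC !last_min_rcons C_le_B leq_maxr.
  by split.
(* B ≺ C: apply B first; the block of C then moves right by [size Y]. *)
have vBP : valid_event (size P) B by move: vB; rewrite /valid_event size_cat; lia.
have [Q [Y [M [eP Y_gt0 eB]]]] := valid_event_block vBP.
subst P B; move: B_lt_C sC; rewrite /ev_max /ev_min /= !size_cat => B_lt_C sC.
have vQY : valid_event (size (apply_events s Cs)) (block_event Q Y).
  by rewrite eCs -!catA valid_block_event.
have [Ds [vDs eDs sDs lDs]] := IH _ vCs sCs vQY.
rewrite event_len_block /block_event /ev_min /= in lDs.
exists (rcons Ds (block_event (Q ++ map lc Y ++ map rc Y ++ M) X)).
rewrite valid_events_rcons apply_events_rcons sorted_preceq_rcons vDs sDs eDs.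
have eQY : apply_event (Q ++ Y ++ M ++ X ++ S) (block_event Q Y) =
    (Q ++ map lc Y ++ map rc Y ++ M) ++ X ++ S by rewrite apply_block_event -!catA.
rewrite eCs -!catA eQY !apply_block_event -!catA.
rewrite last_min_rcons event_len_block /valid_event /block_event /ev_min /ev_max /=.
by rewrite !size_cat !size_map; split => //; lia.
Qed.

Lemma exists_sorted_events (s : seq gene) (Bs : seq event) : valid_events s Bs ->
  exists Cs, [/\ valid_events s Cs, apply_events s Cs = apply_events s Bs
    & sorted ev_preceq Cs].
Proof.
elim/last_ind: Bs => [|Bs B IH]; first by exists [::].
rewrite valid_events_rcons apply_events_rcons => /andP [vBs vB].
have [Cs [vCs eCs sCs]] := IH vBs; rewrite -eCs in vB *.
by have [Ds [vDs eDs sDs _]] := sorted_insert_event vCs sCs vB; exists Ds.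
Qed.

Section PairwiseDuplication.

Variables (T : Type) (r : rel T) (f g : T -> T).
Hypotheses (r_sym : symmetric r) (r_f : forall x y, r x y -> r (f x) y)
  (r_g : forall x y, r x y -> r (g x) y) (r_fg : forall x, r (f x) (g x)).

Let r_fl x y : r x y -> r x (f y). Proof. by rewrite r_sym [r x _]r_sym; exact: r_f. Qed.
Let r_gl x y : r x y -> r x (g y). Proof. by rewrite r_sym [r x _]r_sym; exact: r_g. Qed.

Let all2rel_fg (X : seq T) : pairwise r X -> all2rel (fun x y => r (f x) (g y)) X.
Proof.
elim: X => //= x X IH /andP [rx rX].
rewrite allrel_consl allrel_consr /= r_fg IH // andbT.
by apply/andP; split; apply: sub_all rx => y rxy; [apply: r_gl; apply: r_f|
  apply: r_f; apply: r_gl; rewrite r_sym].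
Qed.

Lemma pairwise_dup_block (P X S : seq T) : pairwise r (P ++ X ++ S) ->
  pairwise r (P ++ map f X ++ map g X ++ S).
Proof.
rewrite !pairwise_cat !allrel_catr !pairwise_map !allrel_mapl !allrel_mapr.
case/and5P => /andP [rPX rPS] rP rXS rX rS.
rewrite rPS rP rS /= !andbT; apply/and5P; split.
- by apply/andP; split; move: rPX; apply: sub_allrel => x y; [exact: r_fl|exact: r_gl].
- by rewrite all2rel_fg //; move: rXS; apply: sub_allrel => x y; exact: r_f.
- by move: rX; apply: sub_pairwise => x y /= rxy; apply: r_f; apply: r_fl.
- by move: rXS; apply: sub_allrel => x y; exact: r_g.
- by move: rX; apply: sub_pairwise => x y /= rxy; apply: r_g; apply: r_gl.
Qed.

End PairwiseDuplication.

Definition incomp (x y : gene) : bool := ~~ prefix x y && ~~ prefix y x.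

Lemma incompC : symmetric incomp.
Proof. by move=> x y; rewrite /incomp andbC. Qed.

Lemma incomp_rcons (x y : gene) (b : bool) : incomp x y -> incomp (rcons x b) y.
Proof.
case/andP => xy yx; apply/andP; split.
  by apply: contra xy; rewrite -cats1; exact: catl_prefix.
apply/negP => /prefixP [t]; case/lastP: t => [|t c].
  by rewrite cats0 => exy; rewrite -exy prefix_rcons in xy.
by rewrite -rcons_cat => /rcons_inj [ex _]; rewrite ex prefix_prefix in yx.
Qed.

Lemma incomp_lc_rc (x : gene) : incomp (lc x) (rc x).
Proof. by rewrite /incomp /lc /rc -!cats1 !prefix_catr // eqxx. Qed.

Lemma pairwise_incomp_apply_events (s : seq gene) (Bs : seq event) :
  pairwise incomp s -> valid_events s Bs -> pairwise incomp (apply_events s Bs).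
Proof.
elim: Bs s => //= B Bs IH s incomp_s /andP [vB vBs]; apply: IH vBs.
have [P [X [S [es _ eB]]]] := valid_event_block vB; subst s B.
rewrite apply_block_event; apply: pairwise_dup_block => //.
- exact: incompC.
- by move=> x y; exact: incomp_rcons.
- by move=> x y; exact: incomp_rcons.
- exact: incomp_lc_rc.
Qed.

Lemma uniq_apply_events (Bs : seq event) :
  valid_events root_array Bs -> uniq (apply_events root_array Bs).
Proof.
move=> vBs; apply: (pairwise_uniq (r := incomp)).
  by move=> x; rewrite /incomp prefix_refl.
exact: pairwise_incomp_apply_events.
Qed.

Lemma cat_eq_cat_leq (T : Type) (A B C D : seq T) :
  A ++ B = C ++ D -> size A <= size C -> exists M, C = A ++ M /\ B = M ++ D.
Proof.
elim: A C => [|a A IH] C /=; first by move=> ->; exists C.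
case: C => [|c C] //= [-> /IH e]; rewrite ltnS => /e [M [-> ->]].
by exists M.
Qed.

Lemma lc_inj : injective lc. Proof. exact: rcons_injl. Qed.

Lemma rc_inj : injective rc. Proof. exact: rcons_injl. Qed.

Lemma lc_neq_rc (x y : gene) : lc x <> rc y.
Proof. by move/rcons_inj. Qed.

Lemma nth_dup_lc (A W R : seq gene) (i : nat) : size A <= i < size A + size W ->
  nth [::] (A ++ map lc W ++ map rc W ++ R) i = lc (nth [::] W (i - size A)).
Proof.
move=> /andP [Ai iAW]; have iW : i - size A < size W by lia.
by rewrite nth_cat ltnNge Ai nth_cat size_map iW (nth_map [::]).
Qed.

Lemma nth_dup_rc (A W R : seq gene) (i : nat) :
  size A + size W <= i < size A + size W + size W ->
  nth [::] (A ++ map lc W ++ map rc W ++ R) i = rc (nth [::] W (i - size A - size W)).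
Proof.
move=> /andP [AWi iAWW]; have Ai : size A <= i by lia.
have iW : i - size A - size W < size W by lia.
rewrite nth_cat ltnNge Ai nth_cat size_map ltnNge leq_subRL // AWi /=.
by rewrite nth_cat size_map iW (nth_map [::]).
Qed.

Lemma dup_blocks_no_overlap (P0 X S0 P Y S : seq gene) : uniq X -> 0 < size Y ->
  P0 ++ map lc X ++ map rc X ++ S0 = P ++ map lc Y ++ map rc Y ++ S ->
  size P0 < size P < size P0 + 2 * size X -> False.
Proof.
move=> uX Y_gt0 E /andP [P0_P P_X]; set s := P ++ _ in E.
have lcX i : size P0 <= i < size P0 + size X ->
    nth [::] s i = lc (nth [::] X (i - size P0)) by rewrite -E; exact: nth_dup_lc.
have rcX i : size P0 + size X <= i < size P0 + size X + size X ->
    nth [::] s i = rc (nth [::] X (i - size P0 - size X)) by rewrite -E; exact: nth_dup_rc.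
have lcY i : size P <= i < size P + size Y ->
    nth [::] s i = lc (nth [::] Y (i - size P)) by exact: nth_dup_lc.
have rcY i : size P + size Y <= i < size P + size Y + size Y ->
    nth [::] s i = rc (nth [::] Y (i - size P - size Y)) by exact: nth_dup_rc.
have [XP | PX] := leqP (size P0 + size X) (size P).
  have : nth [::] s (size P) = lc (nth [::] Y 0) by rewrite lcY ?subnn //; lia.
  by rewrite rcX; [move/esym/lc_neq_rc | lia].
(* Unless the [rc] halves of both patterns start at the same position, some
   [lc] gene would equal an [rc] gene; in the aligned case [uniq X] is used. *)
have [XY | YX | XYeq] := ltngtP (size P0 + size X) (size P + size Y).
- have : nth [::] s (size P0 + size X) = rc (nth [::] X 0) by rewrite rcX ?addKn ?subnn //; lia.
  by rewrite lcY; [move/lc_neq_rc | lia].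
- have : nth [::] s (size P + size Y) = rc (nth [::] Y 0) by rewrite rcY ?addKn ?subnn //; lia.
  by rewrite lcX; [move/lc_neq_rc | lia].
have : nth [::] s (size P + size Y) = rc (nth [::] Y 0) by rewrite rcY ?addKn ?subnn //; lia.
rewrite -XYeq rcX ?addKn ?subnn; last by lia.
move/rc_inj => X0_Y0.
have : nth [::] s (size P) = lc (nth [::] Y 0) by rewrite lcY ?subnn //; lia.
rewrite lcX; last by lia.
have k_lt_X : size P - size P0 < size X by lia.
move/lc_inj; rewrite -X0_Y0 => /eqP; rewrite nth_uniq //; last exact: leq_ltn_trans k_lt_X.
by move/eqP; lia.
Qed.

Lemma root_array_no_dup (P Y S : seq gene) :
  0 < size Y -> root_array <> P ++ map lc Y ++ map rc Y ++ S.
Proof. by move=> Y_gt0 /(congr1 size); rewrite /= !size_cat !size_map; lia. Qed.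

Lemma dup_block_lt_last_min (Bs : seq event) :
  valid_events root_array Bs -> sorted ev_preceq Bs ->
  forall P Y S : seq gene, apply_events root_array Bs = P ++ map lc Y ++ map rc Y ++ S ->
  0 < size Y -> size P < last_min Bs.
Proof.
elim/last_ind: Bs => [|Bs B IH].
  by move=> _ _ P Y S E Y_gt0; case: (root_array_no_dup Y_gt0 E).
rewrite valid_events_rcons sorted_preceq_rcons apply_events_rcons.
move=> /andP [vBs vB] /andP [sBs sB].
have [P0 [X [S0 [eBs X_gt0 eB]]]] := valid_event_block vB; subst B.
have uX : uniq X by move: (uniq_apply_events vBs); rewrite eBs !cat_uniq => /and3P [_ _ /andP []].
move=> P Y S; rewrite eBs apply_block_event last_min_rcons /ev_min /= => E Y_gt0.
rewrite addn1 ltnS leqNgt; apply/negP => P0_P.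
have [P_X | X_P] := ltnP (size P) (size P0 + 2 * size X).
  by apply: (dup_blocks_no_overlap uX Y_gt0 E); rewrite P0_P.
have [M [eP eS0]] : exists M, P = (P0 ++ map lc X ++ map rc X) ++ M /\
    S0 = M ++ map lc Y ++ map rc Y ++ S.
  by apply: cat_eq_cat_leq; rewrite -?catA // !size_cat !size_map; lia.
have := IH vBs sBs (P0 ++ X ++ M) Y S; rewrite eBs eS0 -!catA => /(_ erefl Y_gt0).
move: sB X_P; rewrite eP /ev_max /= !size_cat !size_map; lia.
Qed.

Lemma dup_block_inj (P1 X1 S1 P2 X2 S2 : seq gene) : size P1 = size P2 ->
  0 < size X1 -> 0 < size X2 ->
  P1 ++ map lc X1 ++ map rc X1 ++ S1 = P2 ++ map lc X2 ++ map rc X2 ++ S2 ->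
  [/\ P1 = P2, X1 = X2 & S1 = S2].
Proof.
wlog X12 : P1 X1 S1 P2 X2 S2 / size X1 <= size X2.
  move=> wlog_le eP X1_gt0 X2_gt0 E; have [le12|/ltnW le21] := leqP (size X1) (size X2).
    exact: wlog_le.
  by have [-> -> ->] := wlog_le _ _ _ _ _ _ le21 (esym eP) X2_gt0 X1_gt0 (esym E).
move=> eP X1_gt0 _ E.
have eX : size X1 = size X2.
  apply/eqP; rewrite eqn_leq X12 leqNgt; apply/negP => X12'.
  have : nth [::] (P1 ++ map lc X1 ++ map rc X1 ++ S1) (size P1 + size X1) =
      rc (nth [::] X1 0) by rewrite nth_dup_rc ?addKn ?subnn //; lia.
  by rewrite E eP nth_dup_lc; [move/lc_neq_rc | lia].
move/eqP: E; rewrite eqseq_cat // => /andP [/eqP -> /eqP].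
move/eqP; rewrite eqseq_cat ?size_map // => /andP [/eqP /(inj_map lc_inj) -> /eqP].
by move/eqP; rewrite eqseq_cat ?size_map // => /andP [_ /eqP ->].
Qed.

Lemma sorted_events_inj (Bs Cs : seq event) :
  valid_events root_array Bs -> valid_events root_array Cs ->
  sorted ev_preceq Bs -> sorted ev_preceq Cs ->
  apply_events root_array Bs = apply_events root_array Cs -> Bs = Cs.
Proof.
elim/last_ind: Bs Cs => [|Bs B IH]; case/lastP => [|Cs C] //.
- rewrite valid_events_rcons apply_events_rcons => _ /andP [_ vC] _ _.
  have [P [X [S [-> X_gt0 ->]]]] := valid_event_block vC.
  by rewrite apply_block_event => /(root_array_no_dup X_gt0).
- rewrite valid_events_rcons apply_events_rcons => /andP [_ vB] _ _ _.
  have [P [X [S [-> X_gt0 ->]]]] := valid_event_block vB.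
  by rewrite apply_block_event => /esym /(root_array_no_dup X_gt0).
move=> vBsB vCsC sBsB sCsC; move: (vBsB) (vCsC) (sBsB) (sCsC).
rewrite !valid_events_rcons !sorted_preceq_rcons !apply_events_rcons.
move=> /andP [vBs vB] /andP [vCs vC] /andP [sBs _] /andP [sCs _].
have [P1 [X1 [S1 [eBs X1_gt0 eB]]]] := valid_event_block vB.
have [P2 [X2 [S2 [eCs X2_gt0 eC]]]] := valid_event_block vC.
subst B C; rewrite eBs eCs !apply_block_event => E.
have P2_lt_B : size P2 < last_min (rcons Bs (block_event P1 X1)).
  apply: (dup_block_lt_last_min vBsB sBsB _ X2_gt0).
  by rewrite apply_events_rcons eBs apply_block_event E.
have P1_lt_C : size P1 < last_min (rcons Cs (block_event P2 X2)).
  apply: (dup_block_lt_last_min vCsC sCsC _ X1_gt0).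
  by rewrite apply_events_rcons eCs apply_block_event -E.
move: P2_lt_B P1_lt_C; rewrite !last_min_rcons /ev_min /= !addn1 !ltnS => P21 P12.
have eP : size P1 = size P2 by apply/anti_leq/andP.
have [eP12 eX12 eS12] := dup_block_inj eP X1_gt0 X2_gt0 E; subst P2 X2 S2.
by rewrite (IH Cs) // eBs eCs.
Qed.

Theorem lemma3p3 (n : nat) (T : seq gene) :
  dup_tree T -> size T = n ->
  exists! Bs : seq event, sorted ev_preceq Bs /\ produces Bs T.
Proof.
move=> [Bs [vBs <-]] _.
have [Cs [vCs eCs sCs]] := exists_sorted_events vBs.
exists Cs; split=> [|Ds [sDs [vDs eDs]]]; first by do !split.
by apply: sorted_events_inj; rewrite // eCs eDs.
Qed.
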